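(* For every constant $c>0$ there is a constant $C$ such that for every $n\ge2$, every string $x$ of length $n$ and every $i\in\{1,\dots,n\}$, with probability at least $1-n^{-c}$ (over the random hash function), the number of increasing nodes on the path from the root of the DDT of $x$ to the $i$-th leaf is at most $C\log_2 n$.
   Context: Data Dependent Tree (DDT). Fix a string $x=x_1\cdots x_n$ and a hash function $h$, modeled as follows: $h$ assigns to every possible input (a character, or a finite tuple of integers) a value in a totally ordered set; equal inputs receive equal values, distinct inputs receive distinct values, and the relative order of the values of distinct inputs is uniformly random (as for a uniformly random injection), independent of $x$. The DDT of $x$ is a rooted tree built level by level. Level $0$ consists of $n$ leaves in left-to-right order, the $i$-th storing $x_i$, with hash $h(x_i)$. Levels $1,2,3,\dots$ alternate between duplicate levels (odd $\ell$) and increasing levels (even $\ell$). At a duplicate level $\ell$, the nodes of level $\ell-1$ (left to right) are partitioned into maximal runs of consecutive nodes with equal hash; each run $c_1,\dots,c_k$ becomes the ordered list of children of a new duplicate node at level $\ell$ with hash $h(\langle \ell,k,h(c_1)\rangle)$. At an increasing level $\ell$, the nodes of level $\ell-1$ are partitioned into maximal runs of consecutive nodes whose hashes are strictly increasing left to right; each run $c_1,\dots,c_k$ becomes the ordered children of a new increasing node at level $\ell$ with hash $h(\langle \ell,h(c_1),\dots,h(c_k)\rangle)$. Construction stops at the first level consisting of a single node (the root). The height is the number of levels above level $0$. The string induced by a node is the concatenation, left to right, of the characters at the leaves of its subtree. *)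

From HB Require Import structures.
From mathcomp Require Import all_boot all_order all_algebra.
From mathcomp Require Import all_classical all_reals all_analysis.

Set Implicit Arguments. Unset Strict Implicit. Unset Printing Implicit Defensive.
Import Order.TTheory GRing.Theory Num.Theory.

(* Hash inputs, up to the identification "equal hash <-> equal input".       *)
(* Since h is injective, the input <l,k,h(c1)> of a duplicate node is        *)
(* determined by (l, k, input of c1), and the input <l,h(c1),..,h(ck)> of an *)
(* increasing node by (l, inputs of c1..ck).  We therefore represent the     *)
(* hash of a node by its (structural) input term; the random hash function  *)
(* becomes a random injective real-valued key on terms whose relative order  *)
(* on every finite set of distinct terms is uniformly random.               *)
Inductive term (A : Type) :=
| Chr of A
| Dup of nat & nat & term A     (* <l, k, h(c1)>                            *)
| Inc of nat & seq (term A).    (* <l, h(c1), ..., h(ck)>                   *)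

Arguments Chr {A}. Arguments Dup {A}. Arguments Inc {A}.

Section TermEq.
Variable A : eqType.

Fixpoint term_eqb (t u : term A) : bool :=
  match t, u with
  | Chr a, Chr b => a == b
  | Dup l k t', Dup l' k' u' => (l == l') && (k == k') && term_eqb t' u'
  | Inc l ts, Inc l' us =>
      (l == l') &&
      (fix eqs (ts us : seq (term A)) : bool :=
         match ts, us with
         | [::], [::] => true
         | t :: ts, u :: us => term_eqb t u && eqs ts us
         | _, _ => false
         end) ts us
  | _, _ => false
  end.

Lemma term_eqbP : forall t u : term A, reflect (t = u) (term_eqb t u).
Proof.
fix IH 1 => t u.
case: t => [a|l k t|l ts]; case: u => [b|l' k' u|l' us] /=; try by constructor.
- by apply: (iffP eqP) => [->|[]].
- case: eqP => [->|nl]; last by constructor => -[].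
  case: eqP => [->|nk]; last by constructor => -[].
  by case: (IH t u) => [->|nt]; constructor => // -[].
- case: eqP => [->|nl]; last by constructor => -[].
  have H : reflect (ts = us)
    ((fix eqs (ts us : seq (term A)) : bool :=
         match ts, us with
         | [::], [::] => true
         | t :: ts, u :: us => term_eqb t u && eqs ts us
         | _, _ => false
         end) ts us).
    move: ts us; fix IHl 1 => ts us.
    case: ts => [|t ts]; case: us => [|u us]; try by constructor.
    case: (IH t u) => [->|nt]; last by constructor => -[].
    by case: (IHl ts us) => [->|nts]; constructor => // -[].
  by case: H => [->|nts]; constructor => // -[].
Qed.

HB.instance Definition _ := hasDecEq.Build (term A) term_eqbP.
End TermEq.

Fixpoint runs (T : Type) (r : T -> T -> bool) (s : seq T) : seq (seq T) :=
  match s with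
  | [::] => [::]
  | x :: s' =>
      match runs r s' with
      | (y :: t) :: rest =>
          if r x y then (x :: y :: t) :: rest else [:: x] :: (y :: t) :: rest
      | _ => [:: [:: x]]
      end
  end.

Section DDT.
Variables (R : realType) (A : eqType) (key : term A -> R) (x : seq A).

(* partition of level l-1 performed at level l (l >= 1):
   odd l = duplicate level, even l = increasing level *)
Definition ddt_groups (l : nat) (prev : seq (term A)) : seq (seq (term A)) :=
  if odd l then runs (fun a b => a == b) prev
  else runs (fun a b => (key a < key b)%R) prev.

Definition ddt_node (l : nat) (c : seq (term A)) : term A :=
  if odd l then Dup l (size c) (head (Inc 0 [::]) c) else Inc l c.

(* nodes of level l, left to right (levels keep being computed after the
   root is reached; only levels up to the height are used) *)
Fixpoint ddt_level (l : nat) : seq (term A) :=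
  match l with
  | 0 => map Chr x
  | l'.+1 => map (ddt_node l'.+1) (ddt_groups l'.+1 (ddt_level l'))
  end.

Fixpoint group_index (sz : seq nat) (p : nat) : nat :=
  match sz with
  | [::] => 0
  | s :: sz' => if p < s then 0 else (group_index sz' (p - s)).+1
  end.

Fixpoint ddt_anc (i l : nat) : nat :=
  match l with
  | 0 => i
  | l'.+1 => group_index (map size (ddt_groups l'.+1 (ddt_level l'))) (ddt_anc i l')
  end.

Definition ddt_height_is (H : nat) : Prop :=
  size (ddt_level H) = 1%N /\ forall l, (l < H)%N -> size (ddt_level l) <> 1%N.

Definition is_inc_node (t : term A) : bool := if t is Inc _ _ then true else false.

Definition inc_on_path (H i : nat) : nat :=
  count (fun l => if onth (ddt_level l) (ddt_anc i l) is Some t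
                  then is_inc_node t else false) (iota 0 H.+1).
End DDT.

(* A path from the root to a leaf visits one node per level, so the number of
   increasing nodes on it is at most the height plus one; we show that the
   height is O(log n) with probability at least 1 - n^-c.

   Let l be odd (a duplicate level).  Neighbouring nodes of level l have
   distinct hash inputs, and these inputs are fresh: the construction has
   never compared them.  Level l+1 has one node more than the number of
   descents of level l, and each of the size(l) - 1 neighbouring pairs of
   level l is a descent with probability exactly 1/2, even conditionally on any event
   determined by the relative order of the earlier hash inputs.  Hence the
   expectation of size(l+2) - 1 is at most half that of size(l) - 1, so
   P(size(1 + 2K) >= 2) <= n / 2^K, and K ~ (c + 1) log2 n concludes. *)
From HB Require Import structures.
From mathcomp Require Import all_boot all_order all_algebra.
From mathcomp Require Import all_classical all_reals all_analysis.
From mathcomp Require Import measurable_realfun ring lra zify.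
Import Order.TTheory GRing.Theory Num.Theory.
Set Implicit Arguments. Unset Strict Implicit. Unset Printing Implicit Defensive.

Section Runs.
Variables (X : eqType) (r : rel X).

Definition runs_step (x : X) (rs : seq (seq X)) :=
  match rs with
  | (y :: t) :: rest =>
      if r x y then (x :: y :: t) :: rest else [:: x] :: (y :: t) :: rest
  | _ => [:: [:: x]]
  end.

Lemma runs_cons y s : runs r (y :: s) = runs_step y (runs r s).
Proof. by []. Qed.

Lemma runs_head y s : exists t rest, runs r (y :: s) = (y :: t) :: rest.
Proof.
elim: s y => [|z s IH] y; first by exists [::], [::].
have [t [rest E]] := IH z; rewrite runs_cons E /runs_step.
by case: (r y z); [exists (z :: t), rest | exists [::], ((z :: t) :: rest)].
Qed.

Lemma size_runs s : size (runs r s) =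
  ((s != [::]) + count (fun p => ~~ r p.1 p.2) (zip s (behead s)))%N.
Proof.
elim: s => [|y s IH] //; case: s IH => [|z s] IH //.
have [t [rest E]] := runs_head z s; rewrite E /= in IH; rewrite runs_cons E /runs_step.
by case h: (r y z); rewrite /= IH /= h /= ?add0n ?add1n.
Qed.

Lemma size_runs_le s : (size (runs r s) <= size s)%N.
Proof.
rewrite size_runs; case: s => [|y s] //=.
rewrite add1n ltnS; apply: leq_trans (count_size _ _) _.
by rewrite size_zip minnE /= subKn ?leq_subr // leqnSn.
Qed.

Lemma runs_eq_nil s : (runs r s == [::]) = (s == [::]).
Proof. by case: s => [|y s] //; have [t [rest ->]] := runs_head y s. Qed.

End Runs.

Lemma eq_in_runs (X : eqType) (r1 r2 : rel X) s :
  {in s &, r1 =2 r2} -> runs r1 s = runs r2 s.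
Proof.
elim: s => [|y s IH] // H.
rewrite !runs_cons IH; last by move=> a b ha hb; apply: H; rewrite inE ?ha ?hb orbT.
case: s IH H => [|z s] IH H //.
have [t [rest E]] := runs_head r2 z s; rewrite E /runs_step.
by rewrite H // !inE eqxx ?orbT.
Qed.

Lemma equal_runs_heads (X : eqType) (y0 : X) s :
  sorted (fun c1 c2 => head y0 c1 != head y0 c2) (runs (fun a b => a == b) s).
Proof.
elim: s => [|y s IH] //; case: s IH => [|z s] IH //.
have [t [rest E]] := runs_head (fun a b => a == b) z s.
rewrite E /= in IH; rewrite runs_cons E /runs_step.
case: eqP => [->|nyz] /=; first by clear E; case: rest IH.
by rewrite IH andbT; apply/eqP.
Qed.

Lemma sorted_index (X : eqType) (lt : rel X) (s : seq X) :
  irreflexive lt -> transitive lt -> sorted lt s ->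
  {in s &, forall a b, lt a b = (index a s < index b s)%N}.
Proof.
move=> irr tr ss a b ha hb.
case: (ltngtP (index a s) (index b s)) => h.
- exact: (sorted_ltn_index tr ss) h.
- apply/negbTE/negP => lab.
  have lba := (sorted_ltn_index tr ss) _ _ hb ha h.
  by move: (irr a); rewrite (tr _ _ _ lab lba).
- by rewrite (index_inj a ha hb h) irr.
Qed.

Lemma sorted_zip (X : eqType) (r : rel X) s :
  sorted r s -> all (fun q => r q.1 q.2) (zip s (behead s)).
Proof.
elim: s => [|a s IH] //; case: s IH => [|b s] IH //= /andP[hab hs].
by rewrite hab IH.
Qed.

Lemma mem_zip2 (X Y : eqType) (s : seq X) (t : seq Y) a b :
  (a, b) \in zip s t -> a \in s /\ b \in t.
Proof.
elim: s t => [|c s IH] [|e t] //=; rewrite inE => /orP[/eqP [-> ->]|h].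
  by rewrite !inE !eqxx.
by have [h1 h2] := IH _ h; rewrite !inE h1 h2 !orbT.
Qed.

Section Shuffles.
Variable X : eqType.

Fixpoint shuffles (r s : seq X) : seq (seq X) :=
  match r with
  | [::] => [:: s]
  | x :: r' =>
    let fix go (s : seq X) := match s with
      | [::] => [:: x :: r']
      | y :: s' => map (cons x) (shuffles r' (y :: s')) ++ map (cons y) (go s')
      end in go s
  end.

Lemma shuffles0s s : shuffles [::] s = [:: s]. Proof. by []. Qed.
Lemma shuffless0 r : shuffles r [::] = [:: r]. Proof. by case: r. Qed.
Lemma shuffles_cons x r y s : shuffles (x :: r) (y :: s) =
  map (cons x) (shuffles r (y :: s)) ++ map (cons y) (shuffles (x :: r) s).
Proof. by []. Qed.

Lemma size_shuffles r s r' s' : size r = size r' -> size s = size s' ->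
  size (shuffles r s) = size (shuffles r' s').
Proof.
elim: r s r' s' => [|x r IHr] s r' s'.
  by case: r' => // _ _; rewrite !shuffles0s.
case: r' => // x' r' [hr]; elim: s s' => [|y s IHs] s'.
  by case: s' => // _; rewrite !shuffless0.
case: s' => // y' s' [hs].
rewrite !shuffles_cons !size_cat !size_map (IHs s') ?hs //.
by rewrite (IHr (y :: s) r' (y' :: s')) //= hs.
Qed.

Lemma shuffles_perm r s t : t \in shuffles r s -> perm_eq t (r ++ s).
Proof.
elim: r s t => [|x r IHr] s t; first by rewrite shuffles0s inE => /eqP ->.
elim: s t => [|y s IHs] t; first by rewrite shuffless0 inE cats0 => /eqP ->.
rewrite shuffles_cons mem_cat => /orP[] /mapP[u hu ->].
  by rewrite /= perm_cons IHr.
apply: (@perm_trans _ (y :: ((x :: r) ++ s))); first by rewrite perm_cons IHs.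
by rewrite perm_sym -[y :: s]cat1s perm_catCA.
Qed.

Lemma shuffles_subseq r s t : t \in shuffles r s -> subseq r t && subseq s t.
Proof.
elim: r s t => [|x r IHr] s t.
  by rewrite shuffles0s inE sub0seq => /eqP ->; rewrite subseq_refl.
elim: s t => [|y s IHs] t.
  by rewrite shuffless0 inE sub0seq => /eqP ->; rewrite andbT subseq_refl.
rewrite shuffles_cons mem_cat => /orP[] /mapP[u hu ->].
  have /andP[h1 h2] := IHr _ _ hu.
  rewrite /= eqxx h1 /=.
  by case: eqP => _; [exact: subseq_trans (subseq_cons s y) h2 | exact: h2].
have /andP[h1 h2] := IHs _ hu.
rewrite /= eqxx h2 andbT.
by case: eqP => _; [exact: subseq_trans (subseq_cons r x) h1 | exact: h1].
Qed.

Lemma shuffles_uniq r s : uniq (r ++ s) -> uniq (shuffles r s).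
Proof.
elim: r s => [|x r IHr] s; first by rewrite shuffles0s.
elim: s => [|y s IHs]; first by rewrite shuffless0.
move=> U; rewrite shuffles_cons cat_uniq !map_inj_uniq //; try by move=> a b [].
apply/and3P; split.
- by apply: IHr; move: U; rewrite /= => /andP[].
- apply/hasPn => t /mapP[u hu ->]; apply/mapP => -[v hv [exy _]].
  by move: U; rewrite exy /= mem_cat inE eqxx orbT.
- apply: IHs; move: U; rewrite !cat_uniq /= !inE.
  case/and4P => -> /negP h _ ->; rewrite andbT /=.
  by apply/negP => hh; apply: h; rewrite hh !orbT.
Qed.

Lemma shuffles_sorted (lt : rel X) r s : transitive lt ->
  {in r & s, forall a b, lt a b || lt b a} ->
  sorted lt r -> sorted lt s -> exists2 t, t \in shuffles r s & sorted lt t.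
Proof.
move=> tr; elim: r s => [|x r IHr] s.
  by move=> _ _ ss; exists s; rewrite ?shuffles0s ?inE.
elim: s => [|y s IHs].
  by move=> _ sr _; exists (x :: r); rewrite ?shuffless0 ?inE.
move=> tot sr ss; rewrite shuffles_cons.
have sr' : sorted lt r by move: sr => /= /path_sorted.
have ss' : sorted lt s by move: ss => /= /path_sorted.
have lt_r : {in r, forall z, lt x z}.
  by move=> z; move: sr; rewrite /= path_sortedE // => /andP[/allP H _]; apply: H.
have lt_s : {in s, forall z, lt y z}.
  by move=> z; move: ss; rewrite /= path_sortedE // => /andP[/allP H _]; apply: H.
have := tot x y; rewrite !inE !eqxx => /(_ isT isT) /orP[lxy|lyx].
- have [t ht st] : exists2 t, t \in shuffles r (y :: s) & sorted lt t.
    by apply: IHr => // a b ha hb; apply: tot => //; rewrite inE ha orbT.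
  exists (x :: t); first by rewrite mem_cat map_f.
  rewrite /= path_sortedE // st andbT.
  apply/allP => z; rewrite (perm_mem (shuffles_perm ht)) mem_cat inE.
  by case/orP => [/lt_r|/orP[/eqP ->|/lt_s /(tr y x z lxy)]].
- have [t ht st] : exists2 t, t \in shuffles (x :: r) s & sorted lt t.
    by apply: IHs => // a b ha hb; apply: tot => //; rewrite inE hb orbT.
  exists (y :: t); first by rewrite mem_cat orbC map_f.
  rewrite /= path_sortedE // st andbT.
  apply/allP => z; rewrite (perm_mem (shuffles_perm ht)) mem_cat inE.
  by case/orP => [/orP[/eqP ->|/lt_r /(tr x y z lyx)]|/lt_s].
Qed.
End Shuffles.

Section RandomOrder.
Local Open Scope ring_scope.
Local Open Scope classical_set_scope.
Variables (R : realType) (A : eqType) (d : measure_display) (T : measurableType d)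
  (P : probability T R) (key : T -> term A -> R).
Hypothesis key_inj : forall w, injective (key w).
Hypothesis key_measurable : forall t, measurable_fun setT (fun w => key w t).
Hypothesis key_uniform : forall s : seq (term A), uniq s ->
  P [set w | sorted (fun a b => key w a < key w b) s] = ((size s)`!%:R^-1)%:E.

Definition keylt w : rel (term A) := fun a b => key w a < key w b.
Definition ordered (s : seq (term A)) : set T := [set w | sorted (keylt w) s].

Lemma keylt_irr w : irreflexive (keylt w).
Proof. by move=> a; rewrite /keylt ltxx. Qed.

Lemma keylt_trans w : transitive (keylt w).
Proof. by move=> b a c; rewrite /keylt; apply: lt_trans. Qed.

Lemma keylt_total w a b : a != b -> keylt w a b || keylt w b a.
Proof.
move=> ab; rewrite /keylt; case: ltgtP => // /key_inj eab.
by move: ab; rewrite eab eqxx.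
Qed.

Lemma ordered_measurable s : measurable (ordered s).
Proof.
elim: s => [|a s IH]; first by rewrite (_ : ordered [::] = setT) //; apply/seteqP.
case: s IH => [|b s] IH; first by rewrite (_ : ordered [:: a] = setT) //; apply/seteqP.
have -> : ordered [:: a, b & s] = [set w | keylt w a b] `&` ordered (b :: s).
  by apply/seteqP; split => w /=; rewrite /ordered /= => /andP.
apply: measurableI IH.
have := measurable_fun_ltr (key_measurable a) (key_measurable b) measurableT
  (Y := [set true]) I.
by rewrite setTI.
Qed.

Lemma measurableI_ordered E s : measurable E -> measurable (E `&` ordered s).
Proof. by move=> mE; apply: measurableI mE (ordered_measurable s). Qed.

Lemma ordered_exists w V : uniq V -> exists2 pi, pi \in permutations V & ordered pi w.
Proof.
move=> uV; exists (sort (fun a b => key w a <= key w b) V).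
  by rewrite mem_permutations perm_sort.
have up : uniq (sort (fun a b => key w a <= key w b) V) by rewrite sort_uniq.
have H : sorted (fun x y : R => x < y)
    (map (key w) (sort (fun a b => key w a <= key w b) V)).
  rewrite lt_sorted_uniq_le map_inj_uniq // up /= sorted_map.
  by apply: sort_sorted => a b; apply: le_total.
by move: H; rewrite sorted_map.
Qed.

Lemma ordered_unique w p1 p2 : perm_eq p1 p2 -> ordered p1 w -> ordered p2 w -> p1 = p2.
Proof.
move=> pe s1 s2; apply: (irr_sorted_eq (@keylt_trans w) (@keylt_irr w) s1 s2).
exact: perm_mem.
Qed.

Lemma ordered_index w pi : ordered pi w ->
  {in pi &, forall a b, keylt w a b = (index a pi < index b pi)%N}.
Proof. by apply: sorted_index; [exact: keylt_irr | exact: keylt_trans]. Qed.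

Definition pr (E : set T) : R := fine (P E).

Lemma prE E : measurable E -> P E = (pr E)%:E.
Proof. by move=> mE; rewrite /pr fineK // fin_num_measure. Qed.

Lemma pr_ge0 E : measurable E -> 0 <= pr E.
Proof. by move=> mE; rewrite -lee_fin -prE. Qed.

Lemma pr0 : pr set0 = 0.
Proof. by rewrite /pr measure0. Qed.

Lemma prT : pr setT = 1.
Proof. by rewrite /pr probability_setT. Qed.

Lemma prU E F : measurable E -> measurable F -> E `&` F = set0 ->
  pr (E `|` F) = pr E + pr F.
Proof.
move=> mE mF EF; apply: EFin_inj; rewrite EFinD -!prE //; last exact: measurableU.
by rewrite measureU.
Qed.

Lemma ordered_pr s : uniq s -> pr (ordered s) = ((size s)`!%:R)^-1.
Proof. by move=> us; rewrite /pr /ordered key_uniform. Qed.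

Lemma mem_bigsetU (I : eqType) (F : I -> set T) (l : seq I) w :
  (\big[setU/set0]_(i <- l) F i) w <-> exists2 i, i \in l & F i w.
Proof.
elim: l => [|i l IH]; first by rewrite big_nil; split => // -[].
rewrite big_cons; split => [[Fi|/IH [j jl Fj]]|[j]].
- by exists i; rewrite ?inE ?eqxx.
- by exists j; rewrite ?inE ?jl ?orbT.
- by rewrite inE => /orP[/eqP -> Fi|jl Fj]; [left | right; apply/IH; exists j].
Qed.

Lemma pr_bigsetU (I : eqType) (F : I -> set T) (l : seq I) : uniq l ->
  (forall i, measurable (F i)) ->
  {in l &, forall i j, i != j -> F i `&` F j = set0} ->
  pr (\big[setU/set0]_(i <- l) F i) = \sum_(i <- l) pr (F i).
Proof.
elim: l => [|i l IH] /=; first by rewrite !big_nil pr0.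
move=> /andP[il ul] mF dis; rewrite !big_cons prU //.
- by rewrite IH // => a b ha hb; apply: dis; rewrite inE ?ha ?hb orbT.
- exact: bigsetU_measurable (fun j _ => mF j).
- apply/seteqP; split => // w [Fi /mem_bigsetU [j jl Fj]].
  have ij : i != j by apply: contraNneq il => ->.
  by rewrite -(dis i j) ?inE ?eqxx ?jl ?orbT.
Qed.

Lemma pr_partition E V : measurable E -> uniq V ->
  pr E = \sum_(pi <- permutations V) pr (E `&` ordered pi).
Proof.
move=> mE uV; rewrite -pr_bigsetU ?permutations_uniq //.
- congr pr; apply/seteqP; split => w; last by case/mem_bigsetU => pi _ [].
  by move=> Ew; have [pi hpi spi] := ordered_exists w uV; apply/mem_bigsetU; exists pi.
- by move=> pi; apply: measurableI_ordered.
- move=> p1 p2 h1 h2 ne; apply/seteqP; split => // w [[_ s1] [_ s2]].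
  move: h1 h2; rewrite !mem_permutations => h1 h2.
  have pe : perm_eq p1 p2 by apply: perm_trans h1 _; rewrite perm_sym.
  by move: ne; rewrite (ordered_unique pe s1 s2) eqxx.
Qed.

Definition determined (U : seq (term A)) (E : set T) :=
  forall w w', {in U &, forall a b, keylt w a b = keylt w' a b} -> E w -> E w'.

Lemma determined_piece U E pi : determined U E -> perm_eq pi (undup U) ->
  E `&` ordered pi = ordered pi \/ E `&` ordered pi = set0.
Proof.
move=> dE pe.
case: (pselect (exists w, E w /\ ordered pi w)) => [[w0 [Ew0 s0]]|nex].
  left; apply/seteqP; split => w; first by case.
  move=> sw; split => //; apply: (dE w0) => // a b ha hb.
  have [api bpi] : a \in pi /\ b \in pi by rewrite !(perm_mem pe) !mem_undup.
  by rewrite (ordered_index s0) // (ordered_index sw).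
by right; apply/seteqP; split => // w [Ew sw]; apply: nex; exists w.
Qed.

Lemma determined_measurable U E : determined U E -> measurable E.
Proof.
move=> dE.
have -> : E = \big[setU/set0]_(pi <- permutations (undup U)) (E `&` ordered pi).
  apply/seteqP; split => w; last by case/mem_bigsetU => pi _ [].
  move=> Ew; have [pi hpi spi] := ordered_exists w (undup_uniq U).
  by apply/mem_bigsetU; exists pi.
rewrite big_seq; apply: bigsetU_measurable => pi; rewrite mem_permutations => hpi.
by case: (determined_piece dE hpi) => ->; [apply: ordered_measurable | apply: measurable0].
Qed.

Lemma determined_sub U U' E : {subset U <= U'} -> determined U E -> determined U' E.
Proof. by move=> sU dE w w' h; apply: dE => a b ha hb; apply: h; apply: sU. Qed.

Lemma determinedI U U' E F :
  determined U E -> determined U' F -> determined (U ++ U') (E `&` F).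
Proof.
move=> dE dF w w' h [Ew Fw]; split.
  by apply: (dE w) => // a b ha hb; apply: h; rewrite mem_cat ?ha ?hb.
by apply: (dF w) => // a b ha hb; apply: h; rewrite mem_cat ?ha ?hb orbT.
Qed.

Lemma determined_ordered pi : determined pi (ordered pi).
Proof.
move=> w w' h; rewrite /ordered /= => s.
by rewrite -(eq_in_sorted (P := mem pi) (e := keylt w)) //; apply/allP.
Qed.

Lemma ordered_shuffles r s : uniq (r ++ s) ->
  ordered r `&` ordered s = \big[setU/set0]_(t <- shuffles r s) ordered t.
Proof.
move=> urs; apply/seteqP; split => w.
  move=> [sr ss].
  have tot : {in r & s, forall a b, keylt w a b || keylt w b a}.
    move=> a b ha hb; apply: keylt_total; apply: contraTneq urs => eab.
    by rewrite cat_uniq; apply/and3P => -[_ /hasPn /(_ b hb)]; rewrite -eab ha.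
  have [t ht st] := shuffles_sorted (@keylt_trans w) tot sr ss.
  by apply/mem_bigsetU; exists t.
case/mem_bigsetU => t ht; rewrite /ordered /= => st.
have /andP[h1 h2] := shuffles_subseq ht.
by split; [exact: (subseq_sorted (@keylt_trans w) h1 st)
          | exact: (subseq_sorted (@keylt_trans w) h2 st)].
Qed.

Lemma pr_shuffles r s : uniq (r ++ s) ->
  pr (ordered r `&` ordered s) = (size (shuffles r s))%:R / ((size r + size s)`!)%:R.
Proof.
move=> urs; rewrite ordered_shuffles // pr_bigsetU ?shuffles_uniq //.
- rewrite (eq_big_seq (fun _ => ((size r + size s)`!%:R)^-1)).
    by rewrite big_const_seq count_predT iter_addr_0 mulr_natl.
  move=> t ht; rewrite ordered_pr; last by rewrite (perm_uniq (shuffles_perm ht)).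
  by rewrite (perm_size (shuffles_perm ht)) size_cat.
- by move=> t; apply: ordered_measurable.
- move=> t1 t2 h1 h2 ne; apply/seteqP; split => // w [s1 s2].
  have pe : perm_eq t1 t2.
    by apply: perm_trans (shuffles_perm h1) _; rewrite perm_sym (shuffles_perm h2).
  by move: ne; rewrite (ordered_unique pe s1 s2) eqxx.
Qed.

Lemma determined_swap U E a b : determined U E -> a \notin U -> b \notin U -> a != b ->
  pr (E `&` ordered [:: a; b]) = pr (E `&` ordered [:: b; a]).
Proof.
move=> dE aU bU ab; have mO s := measurableI_ordered s (determined_measurable dE).
rewrite (pr_partition (mO _) (undup_uniq U)) (pr_partition (mO _) (undup_uniq U)).
apply: eq_big_seq => pi; rewrite mem_permutations => hpi.
rewrite -!setIA ![ordered [:: _; _] `&` ordered pi]setIC !setIA.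
have upi c e : c \notin U -> e \notin U -> c != e -> uniq (pi ++ [:: c; e]).
  move=> cU eU ce; rewrite cat_uniq (perm_uniq hpi) undup_uniq /= inE ce /= andbT.
  by rewrite !(perm_mem hpi) !mem_undup (negbTE cU) (negbTE eU).
case: (determined_piece dE hpi) => ->; last by rewrite !set0I.
rewrite !pr_shuffles ?upi //; last by rewrite eq_sym.
by rewrite (@size_shuffles _ pi [:: a; b] pi [:: b; a]).
Qed.

Lemma determined_half U E a b : determined U E -> a \notin U -> b \notin U -> a != b ->
  pr (E `&` ordered [:: b; a]) = pr E / 2.
Proof.
move=> dE aU bU ab; have mE := determined_measurable dE.
have mO s := measurableI_ordered s mE.
have : pr E = pr (E `&` ordered [:: a; b]) + pr (E `&` ordered [:: b; a]).
  rewrite -prU //.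
    congr pr; apply/seteqP; split => w; last by case=> -[].
    move=> Ew; rewrite /ordered /= !andbT.
    by case/orP: (keylt_total w ab); [left | right].
  apply/seteqP; split => // w [[_]]; rewrite /ordered /= !andbT => h1 [_ h2].
  by move: (keylt_trans h1 h2); rewrite keylt_irr.
by rewrite (determined_swap dE) // => ->; field.
Qed.

Variable x : seq A.

Definition layer w l := ddt_level (key w) x l.

Definition term_level (t : term A) : nat :=
  match t with Chr _ => 0 | Dup l _ _ => l | Inc l _ => l end.

Lemma term_level_node l c : term_level (ddt_node l c) = l.
Proof. by rewrite /ddt_node; case: ifP. Qed.

Lemma layer_nonempty w l : x != [::] -> layer w l != [::].
Proof.
move=> nx; elim: l => [|l IH]; first by rewrite /layer /= -size_eq0 size_map size_eq0.
rewrite /layer /= -/(layer w l) -size_eq0 size_map size_eq0 /ddt_groups.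
by case: ifP => _; rewrite runs_eq_nil.
Qed.

Definition index_lt (pi : seq (term A)) : rel (term A) :=
  fun a b => (index a pi < index b pi)%N.

(* layer l + 1 computed from layer l = L, when pi lists L in increasing order *)
Definition next_layer l pi (L : seq (term A)) : seq (term A) :=
  map (ddt_node l.+1)
    (if odd l.+1 then runs (fun a b => a == b) L else runs (index_lt pi) L).

Lemma next_layer_nonempty l pi L : L != [::] -> next_layer l pi L != [::].
Proof.
by move=> nL; rewrite /next_layer -size_eq0 size_map size_eq0; case: ifP; rewrite runs_eq_nil.
Qed.

Lemma layerS w l pi : ordered pi w -> perm_eq pi (undup (layer w l)) ->
  layer w l.+1 = next_layer l pi (layer w l).
Proof.
move=> s pe; rewrite /layer /= /ddt_groups /next_layer -/(layer w l); case: ifP => // _.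
congr map; apply: eq_in_runs => a b ha hb /=.
rewrite -/(keylt w a b) (ordered_index s) //; by rewrite (perm_mem pe) mem_undup.
Qed.

Lemma layerS_dup w l pi : odd l.+1 -> layer w l.+1 = next_layer l pi (layer w l).
Proof. by move=> o; rewrite /layer /= /ddt_groups /next_layer o. Qed.

Fixpoint layer_candidates (l : nat) : seq (seq (term A)) :=
  match l with
  | 0 => [:: map Chr x]
  | l'.+1 => flatten (map (fun L => map (fun pi => next_layer l' pi L)
                                    (permutations (undup L))) (layer_candidates l'))
  end.

Lemma layer_candidate w l : layer w l \in layer_candidates l.
Proof.
elim: l => [|l IH]; first by rewrite inE.
have [pi hpi spi] := ordered_exists w (undup_uniq (layer w l)).
rewrite (layerS spi); last by rewrite -mem_permutations.
by apply/flatten_mapP; exists (layer w l) => //; apply: map_f.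
Qed.

Definition early_terms l := flatten (flatten (map layer_candidates (iota 0 l))).

Lemma mem_early_terms w l k t : (k < l)%N -> t \in layer w k -> t \in early_terms l.
Proof.
move=> kl ht; apply/flattenP; exists (layer w k) => //.
by apply/flatten_mapP; exists k; rewrite ?mem_iota ?layer_candidate.
Qed.

Section SameOrder.
Variables (w w' : T) (l : nat).
Hypothesis same_order : {in early_terms l &, forall a b, keylt w a b = keylt w' a b}.

Lemma groups_agree k : (k < l)%N ->
  ddt_groups (key w) k.+1 (layer w k) = ddt_groups (key w') k.+1 (layer w k).
Proof.
move=> kl; rewrite /ddt_groups; case: ifP => // _.
apply: eq_in_runs => a b ha hb /=.
by apply: same_order; [exact: mem_early_terms kl ha | exact: mem_early_terms kl hb].
Qed.

Lemma layer_determined k : (k <= l)%N -> layer w k = layer w' k.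
Proof.
elim: k => [|k IH] // kl.
by rewrite /layer /= -/(layer w k) -/(layer w' k) -(IH (ltnW kl)) (groups_agree kl).
Qed.

Lemma ancestor_determined i k : (k <= l)%N -> ddt_anc (key w) x i k = ddt_anc (key w') x i k.
Proof.
elim: k => [|k IH] // kl; rewrite /= IH ?(ltnW kl) //.
have eg : ddt_groups (key w) k.+1 (layer w k) = ddt_groups (key w') k.+1 (layer w' k).
  by rewrite (groups_agree kl) (layer_determined (ltnW kl)).
by rewrite /layer in eg; rewrite eg.
Qed.
End SameOrder.

Lemma determined_layer (phi : seq (term A) -> Prop) l :
  determined (early_terms l.+1) [set w | phi (layer w l)].
Proof. by move=> w w' h /=; rewrite (layer_determined h (leqnSn l)). Qed.

Definition unfinished j := [set w | (2 <= size (layer w j))%N].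

Lemma unfinished_measurable j : measurable (unfinished j).
Proof.
exact: determined_measurable (@determined_layer (fun L => is_true (2 <= size L)%N) j).
Qed.

Definition descents pi (L : seq (term A)) :=
  count (fun q => ~~ index_lt pi q.1 q.2) (zip L (behead L)).

(* an increasing level followed by a duplicate level *)
Definition two_layers l pi L := next_layer l.+1 [::] (next_layer l pi L).

Lemma size_two_layers l pi L : odd l -> L != [::] ->
  ((size (two_layers l pi L)).-1 <= descents pi L)%N.
Proof.
move=> ol nL; have e1 : odd l.+1 = false by rewrite /= ol.
have ol2 : odd l.+2 by rewrite /= negbK.
apply: (@leq_trans (size (next_layer l pi L)).-1).
  by rewrite -!subn1 leq_sub2r // /two_layers {1}/next_layer ol2 /= size_map size_runs_le.
by rewrite /next_layer e1 size_map size_runs nL.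
Qed.

Lemma descent_indicator Q pi a b : a \in pi -> b \in pi -> a != b ->
  pr ((Q `&` ordered [:: b; a]) `&` ordered pi) =
  (~~ index_lt pi a b)%:R * pr (Q `&` ordered pi).
Proof.
move=> ha hb ab.
have hab : index a pi != index b pi by apply: contra ab => /eqP /(index_inj a ha hb) ->.
case h: (index_lt pi a b) => /=; rewrite ?mul1r ?mul0r.
- rewrite -pr0; congr pr; apply/seteqP; split => // w [[_]].
  rewrite /ordered /= andbT => h1 sw; move: h1; rewrite (ordered_index sw) //.
  by move: h; rewrite /index_lt => h h'; move: (ltn_trans h h'); rewrite ltnn.
- congr pr; apply/seteqP; split => w; first by case=> -[].
  move=> [Qw sw]; do 2!split => //; rewrite /ordered /= andbT (ordered_index sw) //.
  by move: h hab; rewrite /index_lt; case: ltngtP.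
Qed.

Lemma count_natr (X : Type) (f : pred X) s :
  (count f s)%:R = \sum_(q <- s) (f q)%:R :> R.
Proof. by elim: s => [|y s IH]; rewrite ?big_nil ?big_cons //= natrD IH. Qed.

Lemma expected_descents U Q L : determined U Q -> {in L, forall t, t \notin U} ->
  sorted (fun a b => a != b) L ->
  \sum_(pi <- permutations (undup L)) (descents pi L)%:R * pr (Q `&` ordered pi)
  = (size L).-1%:R / 2 * pr Q.
Proof.
move=> dQ LU adj; have mQ := determined_measurable dQ.
have pair_half q : q \in zip L (behead L) ->
    \sum_(pi <- permutations (undup L)) (~~ index_lt pi q.1 q.2)%:R * pr (Q `&` ordered pi)
    = pr Q / 2.
  case: q => a b hq /=.
  have [aL bL] : a \in L /\ b \in L.
    by have [ha hb] := mem_zip2 hq; split => //; apply: mem_behead.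
  have ab : a != b by move/allP: (sorted_zip adj) => /(_ _ hq).
  have mO := measurableI_ordered [:: b; a] mQ.
  rewrite -(determined_half dQ (LU a aL) (LU b bL) ab) (pr_partition mO (undup_uniq L)).
  apply: eq_big_seq => pi; rewrite mem_permutations => hpi.
  by rewrite descent_indicator // (perm_mem hpi) mem_undup.
under eq_bigr do rewrite /descents count_natr mulr_suml.
rewrite exchange_big /= (eq_big_seq (fun _ => pr Q / 2)) //.
rewrite big_const_seq count_predT iter_addr_0 size_zip size_behead minnE subKn ?leq_pred //.
by rewrite -mulr_natl; ring.
Qed.

(* the invariant of the halving induction at the odd level l: Q is
   determined by the order on the terms U of earlier levels, and on Q layer l
   is L, a nonempty sequence of level-l terms without equal neighbours *)
Record layer_state l L U Q : Prop := LayerState {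
  state_level : all (fun t => term_level t == l) L;
  state_neighbours : sorted (fun a b => a != b) L;
  state_nonempty : L != [::];
  state_determined : determined U Q;
  state_earlier : all (fun t => term_level t < l)%N U;
  state_layer : forall w, Q w -> layer w l = L }.

Lemma state_fresh l L U Q : layer_state l L U Q -> {in L, forall t, t \notin U}.
Proof.
case=> hL _ _ _ hU _ t tL; apply/negP => tU.
by move/allP: hU => /(_ t tU); move/allP: hL => /(_ t tL) /eqP ->; rewrite ltnn.
Qed.

Lemma layer_state_next l L U Q pi : odd l -> layer_state l L U Q ->
  pi \in permutations (undup L) ->
  layer_state l.+2 (two_layers l pi L) (U ++ undup L) (Q `&` ordered pi).
Proof.
move=> ol [hL adj nL dQ hU QL]; rewrite mem_permutations => hpi.
have ol2 : odd l.+2 by rewrite /= negbK.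
split.
- rewrite /two_layers {1}/next_layer all_map.
  by apply/allP => c _; apply/eqP; exact: term_level_node.
- rewrite /two_layers /next_layer ol2 sorted_map.
  apply: sub_sorted (equal_runs_heads (Inc 0 [::]) _) => c1 c2 /=.
  by rewrite /ddt_node ol2; apply: contra => /eqP [_ ->].
- by do 2!apply: next_layer_nonempty.
- apply: determinedI => //; apply: determined_sub (@determined_ordered pi) => t.
  by rewrite (perm_mem hpi).
- rewrite all_cat; apply/andP; split; apply/allP => t ht.
    by move/allP: hU => /(_ t ht) /=; lia.
  rewrite mem_undup in ht.
  by move/allP: hL => /(_ t ht) /eqP /= ->; lia.
- move=> w [Qw sw]; have lw := QL w Qw.
  by rewrite (@layerS_dup w l.+1 [::] ol2) (@layerS w l pi sw) lw.
Qed.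

(* at distance 0 the bound holds trivially: Q forces the size of layer l *)
Lemma halving_base l L U Q : layer_state l L U Q ->
  pr (Q `&` unfinished l) <= (size L).-1%:R * pr Q.
Proof.
move=> st; have mQ := determined_measurable (state_determined st).
have QL := state_layer st; case: (leqP 2 (size L)) => hL.
- have -> : Q `&` unfinished l = Q.
    apply/seteqP; split => w; first by case.
    by move=> Qw; split => //; rewrite /unfinished /= QL.
  rewrite -{1}(mul1r (pr Q)); apply: ler_wpM2r; first exact: pr_ge0.
  by rewrite ler1n -ltnS prednK // (leq_trans _ hL).
- have -> : Q `&` unfinished l = set0.
    by apply/seteqP; split => // w [Qw]; rewrite /unfinished /= QL // leqNgt hL.
  by rewrite pr0 mulr_ge0 ?pr_ge0.
Qed.

Lemma halving K l L U Q : odd l -> layer_state l L U Q ->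
  pr (Q `&` unfinished (l + K.*2)) <= (size L).-1%:R / 2 ^+ K * pr Q.
Proof.
elim: K l L U Q => [|K IH] l L U Q ol st.
  by rewrite addn0 expr0 divr1; exact: halving_base st.
have mQ := determined_measurable (state_determined st).
have mQS : measurable (Q `&` unfinished (l + K.+1.*2)).
  by apply: measurableI => //; apply: unfinished_measurable.
rewrite (pr_partition mQS (undup_uniq L)).
apply: (@le_trans _ _ (\sum_(pi <- permutations (undup L))
    (descents pi L)%:R / 2 ^+ K * pr (Q `&` ordered pi))).
  rewrite big_seq [X in _ <= X]big_seq; apply: ler_sum => pi hpi.
  have -> : (Q `&` unfinished (l + K.+1.*2)) `&` ordered pi =
      (Q `&` ordered pi) `&` unfinished (l.+2 + K.*2).
    by rewrite setIAC doubleS !addnS !addSn.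
  apply: le_trans (IH _ _ _ _ _ (layer_state_next ol st hpi)) _; first by rewrite /= negbK.
  apply: ler_wpM2r; first exact/pr_ge0/measurableI_ordered.
  apply: ler_wpM2r; first by rewrite invr_ge0 exprn_ge0.
  by rewrite ler_nat; exact: size_two_layers ol (state_nonempty st).
under eq_bigr do rewrite mulrAC.
rewrite -mulr_suml.
rewrite (expected_descents (state_determined st) (state_fresh st) (state_neighbours st)).
have h2 : (2 : R) ^+ K != 0 by rewrite expf_neq0.
rewrite [X in _ <= X](_ : _ = (size L).-1%:R / 2 * pr Q / 2 ^+ K) //.
by rewrite exprS; field.
Qed.

Definition first_layer := next_layer 0 [::] (map Chr x).

Lemma first_layer_state : x != [::] -> layer_state 1 first_layer [::] setT.
Proof.
move=> nx; split.
- rewrite /first_layer /next_layer all_map.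
  by apply/allP => c _; apply/eqP; exact: term_level_node.
- rewrite /first_layer /next_layer /= sorted_map.
  apply: sub_sorted (equal_runs_heads (Inc 0 [::]) _) => c1 c2 /=.
  by rewrite /ddt_node /=; apply: contra => /eqP [_ ->].
- by apply: next_layer_nonempty; rewrite -size_eq0 size_map size_eq0.
- by [].
- by [].
- by move=> w _; rewrite (@layerS_dup w 0 [::]).
Qed.

(* by Markov's inequality, the height exceeds 1 + 2K with probability at
   most n / 2^K *)
Lemma unfinished_bound K : x != [::] -> pr (unfinished (1 + K.*2)) <= (size x)%:R / 2 ^+ K.
Proof.
move=> nx; have := @halving K 1 _ _ _ isT (first_layer_state nx).
rewrite setTI prT mulr1 => /le_trans; apply.
apply: ler_wpM2r; first by rewrite invr_ge0 exprn_ge0.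
rewrite ler_nat /first_layer /next_layer size_map (leq_trans (leq_pred _)) //.
by apply: leq_trans (size_runs_le _ _) _; rewrite size_map.
Qed.

Definition short_path (C : R) (i : nat) := [set w | exists H : nat,
  ddt_height_is (key w) x H /\
  ((inc_on_path (key w) x H i)%:R <= C * (ln ((size x)%:R) / ln 2))].

Lemma short_path_measurable C i : measurable (short_path C i).
Proof.
have -> : short_path C i = \bigcup_H [set w | ddt_height_is (key w) x H /\
      ((inc_on_path (key w) x H i)%:R <= C * (ln ((size x)%:R) / ln 2))].
  by apply/seteqP; split => w /= [H hH]; exists H.
apply: bigcupT_measurable => H; apply: (@determined_measurable (early_terms H.+1)).
move=> w w' h /= [[h1 h2] h3].
have eL k : (k <= H.+1)%N -> ddt_level (key w) x k = ddt_level (key w') x k.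
  by move=> hk; have := layer_determined h hk.
split; first split.
- by rewrite -eL.
- by move=> l lH; rewrite -eL; [apply: h2 | lia].
- suff -> : inc_on_path (key w') x H i = inc_on_path (key w) x H i by [].
  apply: eq_in_count => l; rewrite mem_iota /= add0n => hl.
  by rewrite -eL ?(ltnW hl) // (ancestor_determined h i (ltnW hl)).
Qed.

Lemma finished_short_path C i K : x != [::] ->
  (2 * K.+1)%:R <= C * (ln ((size x)%:R) / ln 2) ->
  ~` unfinished (1 + K.*2) `<=` short_path C i.
Proof.
move=> nx hC w /= hw.
have root_by : size (layer w (1 + K.*2)) == 1%N.
  have hw' : ~ (2 <= size (layer w (1 + K.*2)))%N := hw.
  have hn := layer_nonempty w (1 + K.*2) nx; rewrite -size_eq0 in hn.
  by move: hw' hn; case: (size (layer w (1 + K.*2))) => [|[|n]].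
have ex : exists l, size (layer w l) == 1%N by exists (1 + K.*2).
case: (ex_minnP ex) => H /eqP hH hmin.
exists H; split; first split => //.
  by move=> l lH /eqP /hmin; rewrite leqNgt lH.
apply: le_trans hC; rewrite ler_nat /inc_on_path.
apply: leq_trans (count_size _ _) _; rewrite size_iota.
by have := hmin _ root_by; rewrite -addnn; lia.
Qed.

Lemma short_path_pr C i K (bound : R) : x != [::] ->
  (2 * K.+1)%:R <= C * (ln ((size x)%:R) / ln 2) ->
  (size x)%:R / 2 ^+ K <= bound ->
  ((1 - bound)%:E <= P (short_path C i))%E.
Proof.
move=> nx hC hb; have mU := unfinished_measurable (1 + K.*2).
apply: (@le_trans _ _ (P (~` unfinished (1 + K.*2)))).
  rewrite probability_setC // (prE mU) -EFinB lee_fin lerB //.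
  exact: le_trans (unfinished_bound K nx) hb.
apply: le_measure; rewrite ?inE; first exact: measurableC.
  exact: short_path_measurable.
exact: finished_short_path.
Qed.
End RandomOrder.

Local Open Scope ring_scope.
Local Open Scope classical_set_scope.

(* with K = floor((c + 1) log2 n) + 1, the path bound 2K + 2 is
   (2c + 6) log2 n and n / 2^K <= n^-c *)
Lemma choose_depth (R : realType) (c : R) (n : nat) : 0 < c -> (2 <= n)%N ->
  let K := (Num.truncn ((c + 1) * (ln (n%:R : R) / ln 2))).+1 in
  (2 * K.+1)%:R <= (2 * c + 6) * (ln (n%:R : R) / ln 2) /\
  n%:R / 2 ^+ K <= n%:R `^ (- c).
Proof.
move=> c0 n2 K.
have ln2 : 0 < ln (2 : R) by apply: ln_gt0; lra.
have n0 : (0 : R) < n%:R by rewrite ltr0n; lia.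
have lnn : ln (2 : R) <= ln (n%:R : R) by rewrite ler_ln ?posrE ?ler_nat //; lra.
have lg1 : 1 <= ln (n%:R : R) / ln 2 by rewrite ler_pdivlMr // mul1r.
rewrite /K; set L := ln (n%:R : R) / ln 2 in lg1 *.
set y := (c + 1) * L.
have y0 : 0 <= y by apply: mulr_ge0; lra.
have [ty1 ty2] : (Num.truncn y)%:R <= y /\ y < (Num.truncn y).+1%:R.
  by have /andP[] := truncn_itv y0.
have ey : y = (c + 1) * L by [].
have eL : L = ln (n%:R : R) / ln 2 by [].
clearbody y L; split.
  have -> : (2 * c + 6) * L = 2 * y + 4 * L by rewrite ey; ring.
  rewrite -addn2 natrM natrD; lra.
have eK k : (2 : R) ^+ k = expR (k%:R * ln 2).
  by rewrite mulr_natl -lnXn ?lnK // posrE exprn_gt0.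
have en : (n%:R : R) = expR (ln n%:R) by rewrite lnK // posrE.
rewrite /powR ifN; last by rewrite gt_eqF.
rewrite eK {1}en -expRN -expRD ler_expR.
have : (c + 1) * ln (n%:R : R) <= (Num.truncn y).+1%:R * ln 2.
  have : y * ln 2 <= (Num.truncn y).+1%:R * ln 2 by rewrite ler_pM2r //; apply: ltW.
  by rewrite ey eL -!mulrA mulVf ?mulr1 // gt_eqF.
lra.
Qed.

Theorem mainTheorem9 (R : realType) :
  forall c : R, 0 < c ->
  exists C : R,
  forall (A : eqType) (n : nat) (x : seq A) (i : 'I_n),
    (2 <= n)%N -> size x = n ->
  forall (d : measure_display) (T : measurableType d) (P : probability T R)
         (key : T -> term A -> R),
    (forall w, injective (key w)) ->
    (forall t, measurable_fun setT (fun w => key w t)) ->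
    (forall s : seq (term A), uniq s ->
       P [set w | sorted (fun a b => key w a < key w b) s]
       = ((size s)`!%:R^-1)%:E) ->
    ((1 - (n%:R `^ (- c)))%:E <=
       P [set w | exists H : nat, ddt_height_is (key w) x H /\
                  ((inc_on_path (key w) x H i)%:R <= C * (ln (n%:R) / ln 2))%R])%E.
Proof.
move=> c c0; exists (2 * c + 6) => A n x i n2 sx d T P key key_inj key_meas key_unif.
have [path_le tail_le] := choose_depth c0 n2.
have nx : x != [::] by rewrite -size_eq0 sx; lia.
subst n; exact: (short_path_pr key_inj key_meas key_unif i nx path_le tail_le).
Qed.
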